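(* Let $l\in\mathbb{N}$, let $\mathcal{A},\mathcal{B}_1,\mathcal{B}_2,\mathcal{C}$ be finite sets, and let $p_{AB_1B_2C}=p_Ap_{B_1|A}p_{B_2|A}p_{C|B_1B_2}$ be a pmf on $\mathcal{A}\times\mathcal{B}_1\times\mathcal{B}_2\times\mathcal{C}$ such that $p_A$ is a type of sequences in $\mathcal{A}^l$. Let $u^l:[M_u]\to\mathcal{A}^l$ be a map such that $u^l(m)$ has type $p_A$ for every $m$, and let $(M_1,M_2)\in[M_u]\times[M_u]$ be random variables with an arbitrary joint pmf. Suppose $(A_1^l,A_2^l,B_1^l,B_2^l,C^l)$ has pmf $$p(a_1^l,a_2^l,b_1^l,b_2^l,c^l)=\Big[\sum_{m_1,m_2}P(M_1=m_1,M_2=m_2)\mathbf{1}\{u^l(m_1)=a_1^l,u^l(m_2)=a_2^l\}\Big]\prod_{i=1}^lp_{B_1|A}(b_{1i}|a_{1i})p_{B_2|A}(b_{2i}|a_{2i})p_{C|B_1B_2}(c_i|b_{1i},b_{2i}),$$ and let $I\in\{1,\dots,l\}$ be uniformly distributed and independent of $(A_1^l,A_2^l,B_1^l,B_2^l,C^l)$. Then for all $x,y_1,y_2,z$, $$P(A_{1I}=x,A_{2I}=x,B_{1I}=y_1,B_{2I}=y_2,C_I=z\mid A_1^l=A_2^l)=p_{AB_1B_2C}(x,y_1,y_2,z),$$ provided $P(A_1^l=A_2^l)>0$.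
   Context: A pmf $p_A$ on $\mathcal{A}$ is a type of sequences in $\mathcal{A}^l$ if $lp_A(a)$ is an integer for all $a$; a sequence $a^l$ has type $p_A$ if $\frac1l|\{i:a_i=a\}|=p_A(a)$ for all $a$. $A_{1I}$ denotes the $I$-th component of $A_1^l$, etc. *)

From HB Require Import structures.
From mathcomp Require Import all_boot all_order all_algebra.
Set Implicit Arguments. Unset Strict Implicit. Unset Printing Implicit Defensive.
Import Order.TTheory GRing.Theory Num.Theory.
Local Open Scope ring_scope.

Section Defs.
Variable R : realFieldType.

Definition is_pmf (T : finType) (p : T -> R) : Prop :=
  (forall t, 0 <= p t) /\ \sum_(t : T) p t = 1.

Definition is_cond_pmf (S T : finType) (p : S -> T -> R) : Prop :=
  forall s, is_pmf (p s).

Definition is_type (A : finType) (l : nat) (pA : A -> R) : Prop :=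
  forall a, exists k : int, l%:R * pA a = k%:~R.

Definition has_type (A : finType) (l : nat) (s : {ffun 'I_l -> A}) (pA : A -> R)
  : Prop :=
  forall a, (l%:R)^-1 * (#|[set i | s i == a]|)%:R = pA a.

Definition seq_pmf (A B1 B2 C : finType) (l Mu : nat)
  (pB1 : A -> B1 -> R) (pB2 : A -> B2 -> R) (pC : B1 -> B2 -> C -> R)
  (u : 'I_Mu -> {ffun 'I_l -> A}) (PM : 'I_Mu * 'I_Mu -> R)
  (a1 a2 : {ffun 'I_l -> A}) (b1 : {ffun 'I_l -> B1}) (b2 : {ffun 'I_l -> B2})
  (c : {ffun 'I_l -> C}) : R :=
  (\sum_(m : 'I_Mu * 'I_Mu) PM m * ((u m.1 == a1) && (u m.2 == a2))%:R) *
  \prod_(i < l) (pB1 (a1 i) (b1 i) * pB2 (a2 i) (b2 i) * pC (b1 i) (b2 i) (c i)).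

(* probability of an event E on (I, A_1^l, A_2^l, B_1^l, B_2^l, C^l), where
   I is uniform on 'I_l (i.e. {1,...,l}, 0-based) and independent of the rest *)
Definition probI (A B1 B2 C : finType) (l Mu : nat)
  (pB1 : A -> B1 -> R) (pB2 : A -> B2 -> R) (pC : B1 -> B2 -> C -> R)
  (u : 'I_Mu -> {ffun 'I_l -> A}) (PM : 'I_Mu * 'I_Mu -> R)
  (E : 'I_l -> {ffun 'I_l -> A} -> {ffun 'I_l -> A} -> {ffun 'I_l -> B1} ->
       {ffun 'I_l -> B2} -> {ffun 'I_l -> C} -> bool) : R :=
  \sum_(i : 'I_l) \sum_(a1 : {ffun 'I_l -> A}) \sum_(a2 : {ffun 'I_l -> A})
  \sum_(b1 : {ffun 'I_l -> B1}) \sum_(b2 : {ffun 'I_l -> B2})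
  \sum_(c : {ffun 'I_l -> C})
    (l%:R)^-1 * seq_pmf pB1 pB2 pC u PM a1 a2 b1 b2 c * (E i a1 a2 b1 b2 c)%:R.

End Defs.

From Pilot Require Import Defs.
From HB Require Import structures.
From mathcomp Require Import all_boot all_order all_algebra.
From mathcomp Require Import ring.
Set Implicit Arguments. Unset Strict Implicit. Unset Printing Implicit Defensive.
Import Order.TTheory GRing.Theory Num.Theory.
Local Open Scope ring_scope.

(* Conditioned on A_1^l = A_2^l, the shared sequence is a codeword u(m) whose
   type is p_A, so exactly l p_A(x) of its coordinates equal x.  Given the
   codeword, (B_1, B_2, C) is drawn by a memoryless channel, whose marginal at
   a single coordinate i is p_{B_1|A} p_{B_2|A} p_{C|B_1B_2} at that coordinate.
   Averaging over the uniform I therefore yields p_A(x) times the channel, and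
   the normalization P(A_1^l = A_2^l) cancels. *)

Section ProductKernel.
Variables (R : realFieldType) (I B1 B2 C : finType).
Variable K : I -> B1 -> B2 -> C -> R.
Hypothesis K_mass1 : forall j, \sum_t1 \sum_t2 \sum_t3 K j t1 t2 t3 = 1.

Definition prod_kernel (b1 : {ffun I -> B1}) (b2 : {ffun I -> B2})
    (c : {ffun I -> C}) : R :=
  \prod_j K j (b1 j) (b2 j) (c j).

Lemma sum_ffun3_prod (H : I -> B1 -> B2 -> C -> R) :
  \sum_(b1 : {ffun I -> B1}) \sum_(b2 : {ffun I -> B2}) \sum_(c : {ffun I -> C})
     \prod_j H j (b1 j) (b2 j) (c j)
  = \prod_j \sum_t1 \sum_t2 \sum_t3 H j t1 t2 t3.
Proof.
rewrite bigA_distr_bigA; apply: eq_bigr => b1 _.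
rewrite bigA_distr_bigA; apply: eq_bigr => b2 _.
by rewrite bigA_distr_bigA.
Qed.

Lemma sum3_indicator (F : B1 -> B2 -> C -> R) y1 y2 z :
  \sum_t1 \sum_t2 \sum_t3 F t1 t2 t3 * [&& t1 == y1, t2 == y2 & t3 == z]%:R
  = F y1 y2 z.
Proof.
rewrite (big_only1 y1) // => [|t1 /negPf t1N _]; last first.
  by apply: big1 => t2 _; apply: big1 => t3 _; rewrite t1N mulr0.
rewrite (big_only1 y2) // => [|t2 /negPf t2N _]; last first.
  by apply: big1 => t3 _; rewrite t2N andbF mulr0.
rewrite (big_only1 z) // => [|t3 /negPf t3N _]; last by rewrite t3N !andbF mulr0.
by rewrite !eqxx mulr1.
Qed.

Lemma prod_kernel_mass1 :
  \sum_b1 \sum_b2 \sum_c prod_kernel b1 b2 c = 1.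
Proof. by rewrite sum_ffun3_prod big1. Qed.

Lemma prod_kernel_marginal i y1 y2 z :
  \sum_b1 \sum_b2 \sum_c
     prod_kernel b1 b2 c * [&& b1 i == y1, b2 i == y2 & c i == z]%:R
  = K i y1 y2 z.
Proof.
(* Pin the coordinate [i] inside the product, so that distributivity applies. *)
pose H j t1 t2 t3 :=
  K j t1 t2 t3 * ((j == i) ==> [&& t1 == y1, t2 == y2 & t3 == z])%:R.
have pin b1 b2 c : prod_kernel b1 b2 c * [&& b1 i == y1, b2 i == y2 & c i == z]%:R
    = \prod_j H j (b1 j) (b2 j) (c j).
  rewrite /prod_kernel (bigD1 i) //= [RHS](bigD1 i) //= /H eqxx /= mulrAC.
  by congr (_ * _); apply: eq_bigr => j /negPf ->; rewrite mulr1.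
under eq_bigr do under eq_bigr do under eq_bigr do rewrite pin.
rewrite sum_ffun3_prod (bigD1 i) //= [X in _ * X]big1 ?mulr1 => [|j /negPf ji].
  by rewrite /H eqxx sum3_indicator.
rewrite -(K_mass1 j) /H ji.
by under eq_bigr do under eq_bigr do under eq_bigr do rewrite mulr1.
Qed.

End ProductKernel.

Lemma card_eq_has_type (R : realFieldType) (A : finType) (l : nat)
    (pA : A -> R) (s : {ffun 'I_l -> A}) x :
  (0 < l)%N -> has_type s pA -> \sum_i ((s i == x)%:R : R) = l%:R * pA x.
Proof.
move=> l_gt0 s_type; rewrite -(s_type x) mulrA mulfV ?pnatr_eq0 -?lt0n // mul1r.
rewrite -sum1dep_card natr_sum [RHS]big_mkcond /=.
by apply: eq_bigr => i _; case: (s i == x).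
Qed.

Section SequencePmf.
Variables (R : realFieldType) (l : nat) (A B1 B2 C : finType).
Variables (pB1 : A -> B1 -> R) (pB2 : A -> B2 -> R) (pC : B1 -> B2 -> C -> R).
Variables (Mu : nat) (u : 'I_Mu -> {ffun 'I_l -> A}) (PM : 'I_Mu * 'I_Mu -> R).

Local Notation seqA := {ffun 'I_l -> A}.
Local Notation probI := (probI pB1 pB2 pC u PM).

Definition codeword_weight (a1 a2 : seqA) : R :=
  \sum_(m : 'I_Mu * 'I_Mu) PM m * ((u m.1 == a1) && (u m.2 == a2))%:R.

Definition channel (a1 a2 : seqA) j t1 t2 t3 : R :=
  pB1 (a1 j) t1 * pB2 (a2 j) t2 * pC t1 t2 t3.

Lemma seq_pmfE a1 a2 b1 b2 c :
  seq_pmf pB1 pB2 pC u PM a1 a2 b1 b2 c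
  = codeword_weight a1 a2 * prod_kernel (channel a1 a2) b1 b2 c.
Proof. by []. Qed.

Hypothesis pB1_mass1 : forall a, \sum_t pB1 a t = 1.
Hypothesis pB2_mass1 : forall a, \sum_t pB2 a t = 1.
Hypothesis pC_mass1 : forall t1 t2, \sum_t pC t1 t2 t = 1.
Hypothesis l_gt0 : (0 < l)%N.

Lemma channel_mass1 a1 a2 j :
  \sum_t1 \sum_t2 \sum_t3 channel a1 a2 j t1 t2 t3 = 1.
Proof.
rewrite -(pB1_mass1 (a1 j)); apply: eq_bigr => t1 _.
rewrite -[RHS]mulr1 -(pB2_mass1 (a2 j)) mulr_sumr; apply: eq_bigr => t2 _.
by rewrite -[RHS]mulr1 -(pC_mass1 t1 t2) mulr_sumr.
Qed.

Lemma probI_diag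
    (E : 'I_l -> seqA -> seqA -> {ffun 'I_l -> B1} -> {ffun 'I_l -> B2} ->
         {ffun 'I_l -> C} -> bool)
    (F : 'I_l -> seqA -> R) :
    (forall i a1 a2 b1 b2 c, E i a1 a2 b1 b2 c -> a1 = a2) ->
    (forall i a, \sum_b1 \sum_b2 \sum_c
        prod_kernel (channel a a) b1 b2 c * (E i a a b1 b2 c)%:R = F i a) ->
  probI E = l%:R^-1 * \sum_i \sum_a codeword_weight a a * F i a.
Proof.
move=> E_diag E_mass; rewrite /Defs.probI mulr_sumr; apply: eq_bigr => i _.
rewrite mulr_sumr; apply: eq_bigr => a _.
rewrite (big_only1 a) // => [|a' a'Na _]; last first.
  apply: big1 => b1 _; apply: big1 => b2 _; apply: big1 => c _.
  case: (boolP (E i a a' b1 b2 c)) => [/E_diag aa'|_]; last by rewrite mulr0.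
  by rewrite aa' eqxx in a'Na.
rewrite -E_mass !mulr_sumr; apply: eq_bigr => b1 _.
rewrite !mulr_sumr; apply: eq_bigr => b2 _.
by rewrite !mulr_sumr; apply: eq_bigr => c _; rewrite seq_pmfE !mulrA.
Qed.

Lemma l_neq0 : l%:R != 0 :> R.
Proof. by rewrite pnatr_eq0 -lt0n. Qed.

Lemma probI_diag_mass :
  probI (fun _ a1 a2 _ _ _ => a1 == a2) = \sum_a codeword_weight a a.
Proof.
rewrite (@probI_diag _ (fun _ _ => 1)) => [|i a1 a2 b1 b2 c /eqP //|i a].
  under [X in _ * X]eq_bigr do under eq_bigr do rewrite mulr1.
  by rewrite sumr_const card_ord -[(\sum_a _) *+ l]mulr_natl mulKf ?l_neq0.
under eq_bigr do under eq_bigr do under eq_bigr do rewrite eqxx mulr1.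
exact: prod_kernel_mass1 (channel_mass1 a a).
Qed.

Variable pA : A -> R.
Hypothesis u_type : forall m, has_type (u m) pA.

Lemma codeword_weight_card x a :
  codeword_weight a a * \sum_i ((a i == x)%:R : R)
  = codeword_weight a a * (l%:R * pA x).
Proof.
rewrite /codeword_weight !mulr_suml; apply: eq_bigr => m _.
case: (eqVneq (u m.1) a) => [<-|_]; last by rewrite !mulr0 !mul0r.
by rewrite (card_eq_has_type _ l_gt0 (u_type m.1)).
Qed.

Lemma probI_diag_marginal x y1 y2 z :
  probI (fun i a1 a2 b1 b2 c =>
           [&& a1 i == x, a2 i == x, b1 i == y1, b2 i == y2, c i == z & a1 == a2])
  = pA x * pB1 x y1 * pB2 x y2 * pC y1 y2 z * \sum_a codeword_weight a a.
Proof.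
set K := pB1 x y1 * pB2 x y2 * pC y1 y2 z.
rewrite (@probI_diag _ (fun i a => (a i == x)%:R * K))
  => [|i a1 a2 b1 b2 c /and5P[_ _ _ _ /andP[_ /eqP]] //|i a]; last first.
  case: (eqVneq (a i) x) => [ai_x|_]; last first.
    by rewrite mul0r; do 3!(apply: big1 => ? _); rewrite mulr0.
  under eq_bigr do under eq_bigr do under eq_bigr do rewrite eqxx /= andbT.
  by rewrite (prod_kernel_marginal (channel_mass1 a a)) /channel ai_x mul1r.
rewrite exchange_big /= !mulr_sumr; apply: eq_bigr => a _.
under eq_bigr do rewrite mulrA.
rewrite -mulr_suml -mulr_sumr codeword_weight_card.
by rewrite /K; field; exact: l_neq0.
Qed.

End SequencePmf.

Theorem lemma7 (R : realFieldType) (l : nat) (A B1 B2 C : finType)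
  (pA : A -> R) (pB1 : A -> B1 -> R) (pB2 : A -> B2 -> R)
  (pC : B1 -> B2 -> C -> R) (Mu : nat) (u : 'I_Mu -> {ffun 'I_l -> A})
  (PM : 'I_Mu * 'I_Mu -> R) :
  (0 < l)%N ->
  is_pmf pA -> is_cond_pmf pB1 -> is_cond_pmf pB2 -> is_cond_pmf (fun s : B1 * B2 => pC s.1 s.2) ->
  is_type l pA ->
  (forall m, has_type (u m) pA) ->
  is_pmf PM ->
  0 < probI pB1 pB2 pC u PM (fun _ a1 a2 _ _ _ => a1 == a2) ->
  forall (x : A) (y1 : B1) (y2 : B2) (z : C),
    probI pB1 pB2 pC u PM
      (fun i a1 a2 b1 b2 c =>
         [&& a1 i == x, a2 i == x, b1 i == y1, b2 i == y2, c i == z & a1 == a2])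
    / probI pB1 pB2 pC u PM (fun _ a1 a2 _ _ _ => a1 == a2)
    = pA x * pB1 x y1 * pB2 x y2 * pC y1 y2 z.
Proof.
move=> l_gt0 _ pB1_pmf pB2_pmf pC_pmf _ u_type _ + x y1 y2 z.
have pB1_mass1 a := proj2 (pB1_pmf a).
have pB2_mass1 a := proj2 (pB2_pmf a).
have pC_mass1 t1 t2 := proj2 (pC_pmf (t1, t2)).
rewrite (probI_diag_marginal PM pB1_mass1 pB2_mass1 pC_mass1 l_gt0 u_type).
rewrite (probI_diag_mass u PM pB1_mass1 pB2_mass1 pC_mass1 l_gt0) => mass_gt0.
by rewrite mulfK // lt0r_neq0.
Qed.
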